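(* Let $G=K_n$ with $n\geq 3$, let $g:A\to B$ be a function with $s=|g(A)|$ satisfying $2<s<n$. If some $n-s+1$ vertices of $A$ have the same image under $g$ (i.e. $|g^{-1}(v)|=n-s+1$ for some $v\in B$), then $fix(F_G)=2n-(s+3)$.
   Context: A set $S\subseteq V(H)$ is a fixing set of a graph $H$ if the only automorphism of $H$ fixing every vertex of $S$ is the identity; $fix(H)$ is the minimum cardinality of a fixing set of $H$. Functigraph: let $G_1,G_2$ be disjoint copies of a connected graph $G$, with $A=V(G_1)$, $B=V(G_2)$, and let $g:A\to B$ be a function. The functigraph $F_G$ has vertex set $A\cup B$ and edge set $E(G_1)\cup E(G_2)\cup\{ug(u):u\in A\}$. *)

From mathcomp Require Import all_boot all_fingroup.
Set Implicit Arguments. Unset Strict Implicit. Unset Printing Implicit Defensive.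

(* A graph is given by its (symmetric, irreflexive) adjacency relation e on a finite vertex type. *)

Definition is_automorphism (T : finType) (e : rel T) (p : {perm T}) : bool :=
  [forall x, forall y, e (p x) (p y) == e x y].

Definition fixing_set (T : finType) (e : rel T) (S : {set T}) : bool :=
  [forall p : {perm T},
     (is_automorphism e p && [forall x in S, p x == x]) ==> (p == 1%g)].

Lemma fixing_setT (T : finType) (e : rel T) : fixing_set e [set: T].
Proof.
apply/forallP => p; apply/implyP => /andP [_ /forallP Hp].
apply/eqP/permP => x; rewrite perm1.
by have := Hp x; rewrite in_setT /= => /eqP.
Qed.

Lemma fixing_exists (T : finType) (e : rel T) :
  exists k, [exists S : {set T}, fixing_set e S && (#|S| == k)].
Proof. by exists #|[set: T]|; apply/existsP; exists [set: T]; rewrite fixing_setT eqxx. Qed.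

Definition fix_number (T : finType) (e : rel T) : nat := ex_minn (fixing_exists e).

(* Functigraph F_G: vertex set A ∪ B, realised as T + T (inl = A = V(G1), inr = B = V(G2));
   edges: E(G1) ∪ E(G2) ∪ {u g(u) : u ∈ A}. *)
Definition functigraph (T : finType) (eG : rel T) (g : T -> T) : rel (T + T) :=
  fun x y =>
    match x, y with
    | inl u, inl v => eG u v
    | inr u, inr v => eG u v
    | inl u, inr v => g u == v
    | inr v, inl u => g u == v
    end.

Definition complete_graph (n : nat) : rel 'I_n := fun i j => i != j.

From mathcomp Require Import all_boot all_fingroup.
From mathcomp Require Import zify.

(* Write s = |g(A)|, F = g^-1(v) and N = B \ g(A); then |F| = n - s + 1 forces g to be
   injective outside F, and |N| = n - s.
   Lower bound: consider the disjoint blocks {a} (a in F), {a, g(a)} (a not in F) and {b}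
   (b in N).  Two blocks of the same kind are exchanged by an automorphism moving nothing
   else, so a fixing set misses at most one block of each kind and meets at least
   n + (n - s) - 3 pairwise disjoint blocks.
   Upper bound: with a0 in F, p0 not in F and b0 in N, the set (A \ {a0, p0}) + (N \ {b0})
   is fixing.  Indeed b0 is the only unfixed vertex of degree n - 1; being adjacent to all
   of B and to nothing in A it pins down both copies of K_n; a fixed a1 in F \ {a0} then
   fixes v, hence a0 and p0, and finally every g(a). *)
Set Implicit Arguments.
Unset Strict Implicit.
Unset Printing Implicit Defensive.

Section FixingSets.
Variables (T : finType) (e : rel T).

Lemma is_automorphismP (p : {perm T}) :
  reflect (forall x y, e (p x) (p y) = e x y) (is_automorphism e p).
Proof.
apply: (iffP forallP) => [H x y | H x]; last by apply/forallP => y; rewrite H.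
by apply/eqP; move/forallP: (H x).
Qed.

Lemma fixing_setP (S : {set T}) :
  reflect (forall p : {perm T}, is_automorphism e p -> {in S, forall x, p x = x} -> p = 1%g)
          (fixing_set e S).
Proof.
apply: (iffP forallP) => [H p autp fixp | H p].
  by apply/eqP; apply: (implyP (H p)); rewrite autp; apply/forall_inP => x /fixp ->.
by apply/implyP => /andP [autp /forall_inP fixp]; apply/eqP; apply: H autp _ => x /fixp /eqP.
Qed.

Lemma fix_numberE (S : {set T}) k :
  fixing_set e S -> #|S| = k -> (forall S', fixing_set e S' -> k <= #|S'|) ->
  fix_number e = k.
Proof.
move=> fixS cardS lbS; rewrite /fix_number; case: ex_minnP => m.
case/existsP => S' /andP [fixS' /eqP <-] minm.
apply/eqP; rewrite eqn_leq lbS // andbT -cardS.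
by apply: minm; apply/existsP; exists S; rewrite fixS eqxx.
Qed.

Definition degree (x : T) : nat := #|[set y | e x y]|.

Lemma degree_aut (p : {perm T}) x : is_automorphism e p -> degree (p x) = degree x.
Proof.
move/is_automorphismP=> autp; rewrite /degree.
have -> : [set y | e (p x) y] = p @: [set y | e x y].
  apply/setP => y; rewrite inE; apply/idP/imsetP => [exy | [z]].
    by exists ((p^-1)%g y); rewrite ?permKV // inE -autp permKV.
  by rewrite inE => ezx ->; rewrite autp.
exact: card_imset (@perm_inj _ p).
Qed.

Lemma fixing_set_avoiding_le1 (I : finType) (X : {set I}) (h : I -> {set T}) (S : {set T}) :
  fixing_set e S ->
  {in X &, forall x y, x != y -> exists p : {perm T},
     [/\ is_automorphism e p, p != 1%g & forall z, z \notin h x :|: h y -> p z = z]} ->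
  #|[set x in X | [disjoint h x & S]]| <= 1.
Proof.
move=> /fixing_setP fixS swap; apply/card_le1_eqP => x y.
rewrite !inE => /andP [Xx hxS] /andP [Xy hyS].
case: (eqVneq x y) => // neqxy; have [p [autp /eqP nontriv fixout]] := swap x y Xx Xy neqxy.
case: nontriv; apply: fixS autp _ => z zS; apply: fixout.
by rewrite in_setU (disjointFl hxS zS) (disjointFl hyS zS).
Qed.

End FixingSets.

Lemma card_le_meeting_avoiding (I T : finType) (X : {set I}) (h : I -> {set T}) (S : {set T}) :
  {in X &, forall x y, x != y -> [disjoint h x & h y]} ->
  #|X| <= #|S| + #|[set x in X | [disjoint h x & S]]|.
Proof.
move=> hdisj; set Y := [set x in X | [disjoint h x & S]].
pose f x := [pick z in h x :&: S].
have fSome x : x \in X :\: Y -> exists2 z, f x = Some z & z \in h x :&: S.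
  rewrite inE => /andP [nYx Xx]; rewrite /f; case: pickP => [z hz | none]; first by exists z.
  have /set0Pn [z hz] : h x :&: S != set0 by rewrite setI_eq0; move: nYx; rewrite inE Xx.
  by move: (none z); rewrite hz.
have finj : {in X :\: Y &, injective f}.
  move=> x y Xx Xy fxy; case: (fSome x Xx) => z fxz; rewrite inE => /andP [hxz _].
  case: (fSome y Xy) => z'; rewrite -fxy fxz => -[<-]; rewrite inE => /andP [hyz _].
  case: (eqVneq x y) => // neqxy.
  move: Xx Xy; rewrite !inE => /andP [_ Xx] /andP [_ Xy].
  by rewrite (disjointFr (hdisj x y Xx Xy neqxy) hxz) in hyz.
have : #|X :\: Y| <= #|S|.
  rewrite -(card_in_imset finj) -(card_imset S (@Some_inj _)).
  apply: subset_leq_card; apply/subsetP => _ /imsetP [x Xx ->].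
  by case: (fSome x Xx) => z -> /setIP [_ zS]; rewrite imset_f.
have /setIidPr XY : Y \subset X by apply/subsetP => x; rewrite inE => /andP [].
by rewrite -(cardsID Y X) XY addnC leq_add2r.
Qed.

Section SumSets.
Variables (T1 T2 : finType).

Definition sum_set (A : {set T1}) (B : {set T2}) : {set T1 + T2} :=
  [set x | match x with inl a => a \in A | inr b => b \in B end].

Lemma card_sum_set A B : #|sum_set A B| = #|A| + #|B|.
Proof.
have inj_inl : injective (@inl T1 T2) by move=> ? ? [].
have inj_inr : injective (@inr T1 T2) by move=> ? ? [].
have -> : sum_set A B = inl @: A :|: inr @: B.
  apply/setP => -[a|b]; rewrite !inE ?mem_imset //.
    by rewrite (negbTE (_ : inl a \notin inr @: B)) ?orbF //; apply/imsetP => -[].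
  by rewrite (negbTE (_ : inr b \notin inl @: A)) //; apply/imsetP => -[].
rewrite cardsU !card_imset //.
suff /eqP -> : inl @: A :&: inr @: B == set0 by rewrite cards0 subn0.
by apply/set0Pn => -[_ /setIP [/imsetP [? _ ->] /imsetP [? _]]].
Qed.

Variables (sg : {perm T1}) (tu : {perm T2}).

Definition sum_fun (x : T1 + T2) : T1 + T2 :=
  match x with inl a => inl (sg a) | inr b => inr (tu b) end.

Lemma sum_fun_inj : injective sum_fun.
Proof. by case=> [a|b] [a'|b'] //= [] /perm_inj ->. Qed.

Definition perm_sum : {perm T1 + T2} := perm sum_fun_inj.

Lemma perm_sum_inl a : perm_sum (inl a) = inl (sg a).
Proof. by rewrite permE. Qed.

Lemma perm_sum_inr b : perm_sum (inr b) = inr (tu b).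
Proof. by rewrite permE. Qed.

End SumSets.

Lemma complete_graph_aut n (p : {perm 'I_n}) : is_automorphism (@complete_graph n) p.
Proof. by apply/is_automorphismP => x y; rewrite /complete_graph (inj_eq perm_inj). Qed.

Lemma functigraph_perm_sum_aut (T : finType) (eG : rel T) (g : T -> T) (sg tu : {perm T}) :
  is_automorphism eG sg -> is_automorphism eG tu -> (forall a, g (sg a) = tu (g a)) ->
  is_automorphism (functigraph eG g) (perm_sum sg tu).
Proof.
move=> /is_automorphismP autsg /is_automorphismP auttu gsg.
apply/is_automorphismP => -[a|b] [a'|b']; rewrite ?perm_sum_inl ?perm_sum_inr //=.
  by rewrite gsg (inj_eq perm_inj).
by rewrite gsg (inj_eq perm_inj).
Qed.

Section CompleteFunctigraph.
Variables (n : nat) (g : 'I_n -> 'I_n).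
Local Notation e := (functigraph (@complete_graph n) g).

Lemma degree_inl a : degree e (inl a) = n.
Proof.
rewrite /degree; have -> : [set y | e (inl a) y] = sum_set [set~ a] [set g a].
  by apply/setP => -[c|c]; rewrite inE !inE /= // eq_sym.
by rewrite card_sum_set cardsC1 cards1 card_ord addn1 prednK // (leq_ltn_trans _ (ltn_ord a)).
Qed.

Lemma degree_inr b : degree e (inr b) = n.-1 + #|g @^-1: [set b]|.
Proof.
rewrite /degree; have -> : [set y | e (inr b) y] = sum_set (g @^-1: [set b]) [set~ b].
  by apply/setP => -[c|c]; rewrite inE !inE /= // eq_sym.
by rewrite card_sum_set cardsC1 card_ord addnC.
Qed.

End CompleteFunctigraph.

Section OneLargeFiber.
Variables (n : nat) (g : 'I_n -> 'I_n) (v : 'I_n).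
Local Notation e := (functigraph (@complete_graph n) g).
Local Notation s := #|g @: [set: 'I_n]|.
Local Notation F := (g @^-1: [set v]).
Local Notation N := (~: (g @: [set: 'I_n])).
Hypothesis card_fiber : #|F| = n - s + 1.

Lemma card_image_compl : #|N| = n - s.
Proof. by rewrite cardsCs setCK card_ord. Qed.

Lemma card_fiber_eq0 b : (#|g @^-1: [set b]| == 0) = (b \in N).
Proof.
rewrite cards_eq0 inE; apply/eqP/negP => [fib0 /imsetP [a _ gab] | Nb].
  by move/setP/(_ a): fib0; rewrite !inE gab eqxx.
by apply/setP => a; rewrite !inE; apply/eqP => gab; apply: Nb; apply/imsetP; exists a.
Qed.

Lemma g_inj_outside_fiber : {in ~: F &, injective g}.
Proof.
have [a0 Fa0] : exists a0, a0 \in F by apply/set0Pn; rewrite -card_gt0 card_fiber addn1.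
have v_img : v \in g @: [set: 'I_n] by move: Fa0; rewrite !inE => /eqP <-; apply: imset_f.
have imgC : g @: (~: F) = (g @: [set: 'I_n]) :\ v.
  apply/setP => b; rewrite !inE; apply/imsetP/andP => [[a] | [nbv /imsetP [a _ gab]]].
    by rewrite !inE => gav ->; rewrite gav imset_f.
  by exists a; rewrite // !inE -gab.
apply/imset_injP; rewrite imgC; have := cardsD1 v (g @: [set: 'I_n]).
have := cardsC F; have := max_card (g @: [set: 'I_n]).
by rewrite card_fiber v_img card_ord /=; lia.
Qed.

(* Only the indices in A + N, i.e. in [sum_set [set: 'I_n] N], are meaningful. *)
Definition block (x : 'I_n + 'I_n) : {set 'I_n + 'I_n} :=
  match x with
  | inl a => sum_set [set a] ([set g a] :\ v)
  | inr b => sum_set set0 [set b]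
  end.

Lemma block_disjoint :
  {in sum_set [set: 'I_n] N &, forall x y, x != y -> [disjoint block x & block y]}.
Proof.
move=> [a|b] [a'|b']; rewrite !inE /= // => Xx Xy neqxy.
all: rewrite -setI_eq0; apply/eqP/setP => -[c|c].
all: rewrite in_setI /= !inE /= ?andbF //.
- by apply/andP => -[/eqP -> /eqP eqa]; rewrite eqa eqxx in neqxy.
- apply/and3P => -[/andP [cv /eqP gac] _ /eqP gac'].
  have eqa : a = a' by apply: g_inj_outside_fiber; rewrite ?inE -?gac -?gac'.
  by rewrite eqa eqxx in neqxy.
- by apply/andP => -[/andP [_ /eqP ->] /eqP gab']; move: Xy; rewrite -gab' imset_f.
- by apply/and3P => -[/eqP -> _ /eqP ba']; move: Xx; rewrite ba' imset_f.
- by apply/andP => -[/eqP -> /eqP eqb]; rewrite eqb eqxx in neqxy.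
Qed.

Lemma fiber_avoiding_le1 S :
  fixing_set e S -> #|[set x in sum_set F set0 | [disjoint block x & S]]| <= 1.
Proof.
move=> fixS; apply: fixing_set_avoiding_le1 fixS _ => -[a|?] [a'|?]; rewrite ?inE /= //.
move=> /eqP ga /eqP ga' neqx; have {neqx} neqa : a != a' by apply: contraNneq neqx => ->.
exists (perm_sum (tperm a a') 1); split.
- apply: functigraph_perm_sum_aut; rewrite ?complete_graph_aut // => c.
  by rewrite perm1; case: tpermP => [->|->|] //; rewrite ga ga'.
- apply/eqP => /permP /(_ (inl a)); rewrite perm_sum_inl tpermL perm1 => -[eqa].
  by rewrite eqa eqxx in neqa.
- move=> [c|c]; rewrite in_setU /= !inE /= ?perm_sum_inl ?perm_sum_inr ?perm1 //.
  by case/norP => ca ca'; rewrite tpermD // eq_sym.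
Qed.

Lemma fiber_compl_avoiding_le1 S :
  fixing_set e S -> #|[set x in sum_set (~: F) set0 | [disjoint block x & S]]| <= 1.
Proof.
move=> fixS; apply: fixing_set_avoiding_le1 fixS _ => -[a|?] [a'|?]; rewrite ?inE /= //.
move=> Fa Fa' neqx; have {neqx} neqa : a != a' by apply: contraNneq neqx => ->.
have neqga : g a != g a' by apply: contra neqa => /eqP /g_inj_outside_fiber ->; rewrite ?inE.
exists (perm_sum (tperm a a') (tperm (g a) (g a'))); split.
- apply: functigraph_perm_sum_aut; rewrite ?complete_graph_aut // => c.
  case: tpermP => [->|->|ca ca']; rewrite ?tpermL ?tpermR // tpermD //.
    by apply/eqP => gac; apply: ca; apply: g_inj_outside_fiber; rewrite ?inE -?gac.
  by apply/eqP => gac; apply: ca'; apply: g_inj_outside_fiber; rewrite ?inE -?gac.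
- apply/eqP => /permP /(_ (inl a)); rewrite perm_sum_inl tpermL perm1 => -[eqa].
  by rewrite eqa eqxx in neqa.
- move=> [c|c]; rewrite in_setU /= !inE /= ?perm_sum_inl ?perm_sum_inr.
    by case/norP => ca ca'; rewrite tpermD // eq_sym.
  by case: tpermP => [->|->|//]; rewrite ?Fa ?Fa' eqxx ?orbT.
Qed.

Lemma image_compl_avoiding_le1 S :
  fixing_set e S -> #|[set x in sum_set set0 N | [disjoint block x & S]]| <= 1.
Proof.
move=> fixS; apply: fixing_set_avoiding_le1 fixS _ => -[?|b] [?|b']; rewrite ?inE /= //.
move=> Nb Nb' neqx; have {neqx} neqb : b != b' by apply: contraNneq neqx => ->.
exists (perm_sum 1 (tperm b b')); split.
- apply: functigraph_perm_sum_aut; rewrite ?complete_graph_aut // => c.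
  by rewrite perm1 tpermD //; [apply: contraNneq Nb | apply: contraNneq Nb'] => ->; apply: imset_f.
- apply/eqP => /permP /(_ (inr b)); rewrite perm_sum_inr tpermL perm1 => -[eqb].
  by rewrite eqb eqxx in neqb.
- move=> [c|c]; rewrite in_setU /= !inE /= ?perm_sum_inl ?perm_sum_inr ?perm1 //.
  by case/norP => cb cb'; rewrite tpermD // eq_sym.
Qed.

Lemma fixing_set_card_ge S : fixing_set e S -> 2 * n - (s + 3) <= #|S|.
Proof.
move=> fixS; pose avoiding (X : {set 'I_n + 'I_n}) := [set x in X | [disjoint block x & S]].
have avoid3 : #|avoiding (sum_set [set: 'I_n] N)| <= 3.
  have sub : avoiding (sum_set [set: 'I_n] N) \subset
      avoiding (sum_set F set0) :|: avoiding (sum_set (~: F) set0) :|: avoiding (sum_set set0 N).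
    by apply/subsetP => -[a|b]; rewrite !inE //= => ->; case: (g a == v).
  apply: leq_trans (subset_leq_card sub) _.
  apply: leq_trans (leq_card_setU _ _) _; rewrite -[3]/(2 + 1) leq_add //.
    apply: leq_trans (leq_card_setU _ _) _; rewrite -[2]/(1 + 1) leq_add //.
      exact: fiber_avoiding_le1.
    exact: fiber_compl_avoiding_le1.
  exact: image_compl_avoiding_le1.
have := leq_trans (card_le_meeting_avoiding S block_disjoint) (leq_add (leqnn #|S|) avoid3).
rewrite card_sum_set cardsT card_ord card_image_compl.
have s_le : s <= n by rewrite -[n in _ <= n]card_ord max_card.
(* [set] identifies the copies of [s] that differ only in hidden instances, for [lia]. *)
set m := s; lia.
Qed.

Section Witness.
Variables (a0 p0 b0 : 'I_n).
Hypotheses (ga0 : g a0 = v) (gp0 : g p0 != v) (Nb0 : b0 \in N).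

Definition witness := sum_set (~: [set a0; p0]) (N :\ b0).

Lemma a0_neq_p0 : a0 != p0.
Proof. by apply: contraNneq gp0 => <-; rewrite ga0. Qed.

Lemma g_neq_b0 a : g a != b0.
Proof. by apply: contraTneq Nb0 => <-; rewrite inE negbK imset_f. Qed.

Lemma card_witness : #|witness| = 2 * n - (s + 3).
Proof.
rewrite card_sum_set; have := cardsC [set a0; p0]; have := cardsD1 b0 N.
by rewrite cards2 a0_neq_p0 card_image_compl Nb0 card_ord /=; set m := s; lia.
Qed.

Section Automorphism.
Variables (a1 : 'I_n) (p : {perm 'I_n + 'I_n}).
Hypotheses (ga1 : g a1 = v) (a0a1 : a0 != a1).
Hypotheses (autp : is_automorphism e p) (fixp : {in witness, forall x, p x = x}).
Let autE : forall x y, e (p x) (p y) = e x y := elimT (is_automorphismP _ _) autp.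

Lemma witness_preimage x y : p x = y -> y \in witness -> x = y.
Proof. by move=> pxy wy; apply: (@perm_inj _ p); rewrite pxy fixp. Qed.

(* [inr b0] is the only vertex of degree [n - 1] outside [witness]. *)
Lemma aut_fixes_b0 : p (inr b0) = inr b0.
Proof.
have fib0 : #|g @^-1: [set b0]| = 0 by apply/eqP; rewrite card_fiber_eq0.
have := degree_aut (inr b0) autp; rewrite degree_inr fib0 addn0.
case E: (p (inr b0)) => [c|b]; first by rewrite degree_inl; have := ltn_ord c; lia.
rewrite degree_inr => /eqP; rewrite -{2}[n.-1]addn0 eqn_add2l card_fiber_eq0 => Nb.
case: (eqVneq b b0) => [-> // | nbb0].
have wb : inr b \in witness by rewrite inE /= in_setD1 nbb0 Nb.
by have [eqb] := witness_preimage E wb; rewrite eqb eqxx in nbb0.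
Qed.

Lemma aut_keeps_inl a : exists c, p (inl a) = inl c.
Proof.
case E: (p (inl a)) => [c|b]; first by exists c.
have := autE (inr b0) (inl a); rewrite aut_fixes_b0 E /=.
rewrite (negbTE (g_neq_b0 a)) => /negbFE /eqP eqb; rewrite -eqb -aut_fixes_b0 in E.
by have := perm_inj E.
Qed.

Lemma aut_keeps_inr b : exists w, p (inr b) = inr w.
Proof.
case: (eqVneq b b0) => [-> | nbb0]; first by exists b0; rewrite aut_fixes_b0.
case E: (p (inr b)) => [c|w]; last by exists w.
have := autE (inr b0) (inr b); rewrite aut_fixes_b0 E /= /complete_graph.
by rewrite (negbTE (g_neq_b0 c)) eq_sym nbb0.
Qed.

Lemma aut_fixes_v : p (inr v) = inr v.
Proof.
have [w Ew] := aut_keeps_inr v.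
have wa1 : inl a1 \in witness.
  by rewrite !inE negb_or eq_sym a0a1; apply: contraNneq gp0 => <-; rewrite ga1.
have := autE (inl a1) (inr v); rewrite fixp // Ew /= ga1 eqxx.
by move/eqP->.
Qed.

Lemma aut_fixes_a0 : p (inl a0) = inl a0.
Proof.
have [c Ec] := aut_keeps_inl a0.
have := autE (inl a0) (inr v); rewrite Ec aut_fixes_v /= ga0 eqxx => /eqP gc.
case: (eqVneq c a0) => [-> // | nca0].
have wc : inl c \in witness.
  by rewrite !inE negb_or nca0; apply: contraNneq gp0 => <-; rewrite gc.
by have [eqc] := witness_preimage Ec wc; rewrite eqc eqxx in nca0.
Qed.

Lemma aut_fixes_inl a : p (inl a) = inl a.
Proof.
case: (eqVneq a a0) => [-> | naa0]; first exact: aut_fixes_a0.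
case: (eqVneq a p0) => [ap0 | nap0]; last by apply: fixp; rewrite !inE negb_or naa0 nap0.
have [c Ec] := aut_keeps_inl a.
case: (eqVneq c a0) => [ca0 | nca0].
  by move: Ec; rewrite ca0 -aut_fixes_a0 => /perm_inj [eqa]; rewrite eqa eqxx in naa0.
case: (eqVneq c p0) => [cp0 | ncp0]; first by rewrite Ec cp0 ap0.
have wc : inl c \in witness by rewrite !inE negb_or nca0 ncp0.
exact: etrans Ec (esym (witness_preimage Ec wc)).
Qed.

Lemma aut_fixes_inr b : p (inr b) = inr b.
Proof.
case: (boolP (b \in g @: [set: 'I_n])) => [/imsetP [a _ ->] | nb].
  have [w Ew] := aut_keeps_inr (g a).
  by have := autE (inl a) (inr (g a)); rewrite aut_fixes_inl Ew /= eqxx => /eqP ->.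
case: (eqVneq b b0) => [-> | nbb0]; first exact: aut_fixes_b0.
by apply: fixp; rewrite inE /= in_setD1 nbb0 inE nb.
Qed.

End Automorphism.

Lemma fixing_set_witness a1 : g a1 = v -> a0 != a1 -> fixing_set e witness.
Proof.
move=> ga1 a0a1; apply/fixing_setP => p autp fixp; apply/permP => -[a|b]; rewrite perm1.
  exact: aut_fixes_inl ga1 a0a1 autp fixp a.
exact: aut_fixes_inr ga1 a0a1 autp fixp b.
Qed.
End Witness.

Lemma fix_number_functigraph_complete : 1 < s < n -> fix_number e = 2 * n - (s + 3).
Proof.
case/andP => s_gt1 s_lt_n.
have [a0 [a1 [Fa0 Fa1 a0a1]]] : exists a0 a1, [/\ a0 \in F, a1 \in F & a0 != a1].
  by apply/card_gt1P; rewrite card_fiber; lia.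
have [p0 Fp0] : exists p0, p0 \in ~: F.
  by apply/set0Pn; rewrite -card_gt0; have := cardsC F; rewrite card_fiber card_ord; lia.
have [b0 Nb0] : exists b0, b0 \in N by apply/set0Pn; rewrite -card_gt0 card_image_compl; lia.
move: Fa0 Fa1 Fp0; rewrite !inE => /eqP ga0 /eqP ga1 gp0.
apply: fix_numberE (fixing_set_witness ga0 gp0 Nb0 ga1 a0a1) _ fixing_set_card_ge.
exact: card_witness ga0 gp0 Nb0.
Qed.

End OneLargeFiber.

Theorem corollary3p3 (n : nat) (g : 'I_n -> 'I_n) :
  3 <= n ->
  2 < #|g @: [set: 'I_n]| < n ->
  (exists v : 'I_n, #|g @^-1: [set v]| = n - #|g @: [set: 'I_n]| + 1) ->
  fix_number (functigraph (@complete_graph n) g) = 2 * n - (#|g @: [set: 'I_n]| + 3).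
Proof.
(* [3 <= n] is implied by [2 < s < n]. *)
move=> _ /andP [s_gt2 s_lt_n] [v card_fiber].
by apply: (fix_number_functigraph_complete card_fiber); rewrite s_lt_n ltnW.
Qed.
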